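(* Let $d\ge 2$, $n\ge 2$, let $\mathcal G$ be an undirected graph on $\{1,\dots,n\}$ with $m$ edges, assumed acyclic and having a spanning tree, with an arbitrary orientation (incidence matrix $H$, $\bar H=H\otimes I_d$), and let $p(t)\in\mathbb R^{dn}$ be a time-varying configuration with well-defined bearings $g_k(t)$. Then the formation $\mathcal G(p(t))$ is bearing persistently exciting if and only if $g_k(t)$ is persistently exciting for all $k\in\{1,\dots,m\}$.
   Context: $e=\bar Hp=[e_1^\top,\dots,e_m^\top]^\top$, $g_k=e_k/\|e_k\|$. For $y\in\mathbb S^{d-1}$, $\pi_y=I_d-yy^\top$. $\Pi(t)=\mathrm{blkdiag}(\pi_{g_k(t)})$, $L=\bar H^\top\bar H$, $L_B(t)=\bar H^\top\Pi(t)\bar H$. A direction $y(t)\in\mathbb S^{d-1}$ is PE if there exist $T,\mu>0$ with $\int_t^{t+T}\pi_{y(\tau)}d\tau\ge\mu I_d$ for all $t$. $L_B$ is PE if there exist $T,\mu>0$ with $\int_t^{t+T}L_B(\tau)d\tau\ge\mu L$ for all $t$. The formation is bearing persistently exciting (BPE) if $\mathcal G$ has a spanning tree and $L_B$ is PE. *)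

From HB Require Import structures.
From mathcomp Require Import all_boot all_order all_algebra.
From mathcomp Require Import all_classical all_reals all_analysis.
From mathcomp Require Import mxtens.
Set Implicit Arguments. Unset Strict Implicit. Unset Printing Implicit Defensive.
Import Order.TTheory GRing.Theory Num.Theory.
Import numFieldNormedType.Exports.
Local Open Scope ring_scope.

Section Defs.
Variable R : realType.

(* An oriented graph on 'I_n with m edges: edge k goes from (E k).1 (tail)
   to (E k).2 (head). *)
Definition edge_list (n m : nat) := 'I_m -> 'I_n * 'I_n.

Definition simple_graph n m (E : edge_list n m) : Prop :=
  (forall k, (E k).1 != (E k).2) /\
  (forall k l, k != l ->
     ~ ((E k = E l) \/ (E k = ((E l).2, (E l).1)))).

Definition adj_in n m (E : edge_list n m) (S : {set 'I_m}) : rel 'I_n :=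
  fun u v => [exists k in S, (E k == (u, v)) || (E k == (v, u))].

(* Acyclic: no cycle of >= 3 distinct vertices (the graph being simple). *)
Definition acyclic_in n m (E : edge_list n m) (S : {set 'I_m}) : Prop :=
  forall s : seq 'I_n, uniq s -> (3 <= size s)%N -> ~~ cycle (adj_in E S) s.

Definition connected_in n m (E : edge_list n m) (S : {set 'I_m}) : Prop :=
  forall u v : 'I_n, connect (adj_in E S) u v.

Definition acyclic n m (E : edge_list n m) : Prop := acyclic_in E [set: 'I_m].

Definition has_spanning_tree n m (E : edge_list n m) : Prop :=
  exists S : {set 'I_m}, connected_in E S /\ acyclic_in E S.

(* Incidence matrix H (m x n): H k i = -1 if i is the tail of edge k,
   +1 if i is its head, 0 otherwise (so e_k = p_head - p_tail). *)
Definition incidence n m (E : edge_list n m) : 'M[R]_(m, n) :=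
  \matrix_(k, i) ((i == (E k).2)%:R - (i == (E k).1)%:R).

Definition Hbar n m d (E : edge_list n m) : 'M[R]_(m * d, n * d) :=
  tensmx (incidence E) (1%:M : 'M[R]_d).

Definition enorm d (v : 'cV[R]_d) : R := Num.sqrt (\sum_a v a 0 ^+ 2).

Definition evec n m d (E : edge_list n m) (p : 'cV[R]_(n * d)) : 'cV[R]_(m * d) :=
  Hbar d E *m p.
Definition eblock n m d (E : edge_list n m) (p : 'cV[R]_(n * d)) (k : 'I_m)
  : 'cV[R]_d := \col_a (evec E p) (mxtens_index (k, a)) 0.

Definition bearing n m d (E : edge_list n m) (p : 'cV[R]_(n * d)) (k : 'I_m)
  : 'cV[R]_d := (enorm (eblock E p k))^-1 *: eblock E p k.

Definition proj_orth d (y : 'cV[R]_d) : 'M[R]_d := 1%:M - y *m y^T.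

(* Pi = blkdiag(pi_{g_k}) *)
Definition PiB n m d (E : edge_list n m) (p : 'cV[R]_(n * d)) : 'M[R]_(m * d) :=
  \sum_(k < m) tensmx (delta_mx k k) (proj_orth (bearing E p k)).

Definition Lap n m d (E : edge_list n m) : 'M[R]_(n * d) :=
  (Hbar d E)^T *m Hbar d E.

Definition LapB n m d (E : edge_list n m) (p : 'cV[R]_(n * d)) : 'M[R]_(n * d) :=
  (Hbar d E)^T *m PiB E p *m Hbar d E.

Definition mxint p q (a b : R) (F : R -> 'M[R]_(p, q)) : 'M[R]_(p, q) :=
  \matrix_(i, j) (\int[lebesgue_measure]_(t in `[a, b]) F t i j).

Definition loewner_ge k (A B : 'M[R]_k) : Prop :=
  forall x : 'cV[R]_k, (x^T *m B *m x) 0 0 <= (x^T *m A *m x) 0 0.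

Definition PE_dir d (y : R -> 'cV[R]_d) : Prop :=
  exists T mu : R, 0 < T /\ 0 < mu /\
    forall t : R, loewner_ge (mxint t (t + T) (fun tau => proj_orth (y tau)))
                             (mu *: 1%:M).

Definition PE_LB n m d (E : edge_list n m) (p : R -> 'cV[R]_(n * d)) : Prop :=
  exists T mu : R, 0 < T /\ 0 < mu /\
    forall t : R, loewner_ge (mxint t (t + T) (fun tau => LapB E (p tau)))
                             (mu *: Lap d E).

Definition BPE n m d (E : edge_list n m) (p : R -> 'cV[R]_(n * d)) : Prop :=
  has_spanning_tree E /\ PE_LB E p.

End Defs.

(* Cut y := \bar H x into edge blocks y_k; then x^T L x = \sum_k |y_k|^2 and
   x^T L_B(t) x = \sum_k y_k^T pi_{g_k(t)} y_k.  If each g_k is persistently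
   exciting with window T_k and level mu_k, then, pi_g being positive semidefinite,
   each term integrated over a window T >= max T_k is at least mu |y_k|^2 for any
   mu <= min mu_k.  Conversely, in an acyclic graph every edge k is a bridge, so
   the indicator w of the component of its head in G - k satisfies H w = e_k; for
   x = w (x) z only the block y_k = z survives, and the excitation inequality of
   L_B at x is exactly that of g_k at z. *)

From mathcomp Require Import all_boot all_order all_algebra.
From mathcomp Require Import all_classical all_reals all_analysis.
From mathcomp Require Import mxtens measurable_realfun lra.
Import Order.TTheory GRing.Theory Num.Theory.
Local Open Scope ring_scope.
Set Implicit Arguments. Unset Strict Implicit. Unset Printing Implicit Defensive.

Section BoundedMeasurable.
Variable R : realType.
Notation mu := (@lebesgue_measure R).
Implicit Types f g : R -> R.

Definition bounded_measurable f :=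
  measurable_fun setT f /\ exists M : R, forall t, `|f t| <= M.

Lemma bounded_measurable_cst (c : R) : bounded_measurable (fun _ => c).
Proof. by split; [exact: measurable_cst | exists `|c|]. Qed.

Lemma bounded_measurableD f g : bounded_measurable f -> bounded_measurable g ->
  bounded_measurable (fun t => f t + g t).
Proof.
case=> mf [M hM] [mg [N hN]]; split; first exact: measurable_funD.
by exists (M + N) => t; rewrite (le_trans (ler_normD _ _)) // lerD.
Qed.

Lemma bounded_measurableM f g : bounded_measurable f -> bounded_measurable g ->
  bounded_measurable (fun t => f t * g t).
Proof.
case=> mf [M hM] [mg [N hN]]; split; first exact: measurable_funM.
by exists (M * N) => t; rewrite normrM ler_pM.
Qed.

Lemma bounded_measurableB f g : bounded_measurable f -> bounded_measurable g ->
  bounded_measurable (fun t => f t - g t).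
Proof.
move=> bf bg; apply: bounded_measurableD => //.
have := bounded_measurableM (bounded_measurable_cst (-1)) bg.
by congr bounded_measurable; apply/funext => t; rewrite mulN1r.
Qed.

Lemma bounded_measurable_sum (I : Type) (s : seq I) (F : I -> R -> R) :
  (forall i, bounded_measurable (F i)) ->
  bounded_measurable (fun t => \sum_(i <- s) F i t).
Proof.
move=> bF; rewrite (_ : (fun t => _) = \sum_(i <- s) F i); last first.
  by apply/funext => t; rewrite fct_sumE.
apply: big_ind => //; first exact: bounded_measurable_cst.
exact: bounded_measurableD.
Qed.

Lemma bounded_measurable_integrable (a b : R) f : bounded_measurable f ->
  mu.-integrable `[a, b] (EFin \o f).
Proof.
case=> mf [M hM]; apply: measurable_bounded_integrable.
- exact: measurable_itv.
- have /= -> := lebesgue_measure_itv `[a, b].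
  by case: ifP => _ //; rewrite -EFinD ltry.
- exact: measurable_funTS.
- exists M; split => [|M1 MM1 x _ /=]; first exact: num_real.
  exact: le_trans (hM x) (ltW MM1).
Qed.

Lemma Rintegral_sum (a b : R) (I : Type) (s : seq I) (F : I -> R -> R) :
  (forall i, bounded_measurable (F i)) ->
  \int[mu]_(t in `[a, b]) (\sum_(i <- s) F i t) =
  \sum_(i <- s) \int[mu]_(t in `[a, b]) F i t.
Proof.
move=> bF; elim: s => [|i s IH].
  under eq_Rintegral do rewrite big_nil.
  by rewrite big_nil /Rintegral integral0.
under eq_Rintegral do rewrite big_cons.
rewrite big_cons RintegralD ?IH //; first exact: bounded_measurable_integrable.
by apply: bounded_measurable_integrable; exact: bounded_measurable_sum.
Qed.

Lemma ge0_subset_Rintegral_itv (a b b' : R) f : bounded_measurable f ->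
  (forall t, 0 <= f t) -> b' <= b ->
  \int[mu]_(t in `[a, b']) f t <= \int[mu]_(t in `[a, b]) f t.
Proof.
move=> bf f0 b'b; apply: fine_le.
- exact/integrable_fin_num/bounded_measurable_integrable.
- exact/integrable_fin_num/bounded_measurable_integrable.
apply: ge0_subset_integral => //.
- by apply/measurable_EFinP/measurable_funTS; case: bf.
- by move=> x _; rewrite lee_fin.
- by move=> x /=; rewrite !in_itv /= => /andP[-> /le_trans]; apply.
Qed.

End BoundedMeasurable.

Section BlockForms.
Variable R : comPzRingType.

Lemma mulmx_formE p q (u : 'rV[R]_p) (M : 'M[R]_(p, q)) (v : 'cV[R]_q) :
  (u *m M *m v) 0 0 = \sum_i \sum_j u 0 i * M i j * v j 0.
Proof.
rewrite !mxE; under eq_bigr do rewrite mxE big_distrl.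
by rewrite exchange_big.
Qed.

Lemma mulmx_formZ p (u : 'rV[R]_p) (M : 'M[R]_p) (v : 'cV[R]_p) c :
  (u *m (c *: M) *m v) 0 0 = c * (u *m M *m v) 0 0.
Proof. by rewrite -scalemxAr -scalemxAl mxE. Qed.

Lemma sum_mxtens_index m d (f : 'I_(m * d) -> R) :
  \sum_i f i = \sum_l \sum_a f (mxtens_index (l, a)).
Proof.
rewrite pair_big (reindex (@mxtens_index m d)) /=; last first.
  by exists (@mxtens_unindex m d) => x _; rewrite (mxtens_indexK, mxtens_unindexK).
by apply: eq_bigr => -[].
Qed.

Definition col_block m d (y : 'cV[R]_(m * d)) (l : 'I_m) : 'cV[R]_d :=
  \col_a y (mxtens_index (l, a)) 0.

Lemma col_block_tens_delta m d (k : 'I_m) (z : 'cV[R]_d) l :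
  col_block ((delta_mx k 0 : 'cV_m) *t z : 'cV_(m * d)) l = (l == k)%:R *: z.
Proof.
apply/matrixP => a j; rewrite (ord1 j) !mxE mxtens_indexK.
by case: (mxtens_unindex _) => i0 j0; rewrite (ord1 i0) (ord1 j0) andbT.
Qed.

Lemma form_blocks m d (y : 'cV[R]_(m * d)) :
  (y^T *m y) 0 0 = \sum_l ((col_block y l)^T *m col_block y l) 0 0.
Proof.
rewrite mxE sum_mxtens_index; apply: eq_bigr => l _; rewrite mxE.
by apply: eq_bigr => a _; rewrite !mxE.
Qed.

Lemma form_blockdiag m d (y : 'cV[R]_(m * d)) (G : 'I_m -> 'M[R]_d) :
  (y^T *m (\sum_k delta_mx k k *t G k) *m y) 0 0 =
  \sum_l ((col_block y l)^T *m G l *m col_block y l) 0 0.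
Proof.
have entry l l' a b : (\sum_k delta_mx k k *t G k)
    (mxtens_index (l, a)) (mxtens_index (l', b)) = (l == l')%:R * G l a b.
  rewrite summxE (bigD1 l) //= big1 ?addr0 => [|k kl]; rewrite tensmxE mxE.
    by rewrite eqxx eq_sym.
  by rewrite eq_sym (negbTE kl) mul0r.
rewrite mulmx_formE sum_mxtens_index; apply: eq_bigr => l _.
rewrite mulmx_formE; apply: eq_bigr => a _.
rewrite sum_mxtens_index (bigD1 l) //= [X in _ + X]big1 ?addr0 => [|l' l'l].
  by apply: eq_bigr => b _; rewrite entry eqxx mul1r !mxE.
by apply: big1 => b _; rewrite entry eq_sym (negbTE l'l) mul0r mulr0 mul0r.
Qed.

End BlockForms.

Section BoundedMeasurableMx.
Variable R : realType.
Notation mu := (@lebesgue_measure R).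

Definition bounded_measurable_mx p q (F : R -> 'M[R]_(p, q)) :=
  forall i j, bounded_measurable (fun t => F t i j).

Lemma bounded_measurable_mx_cst p q (A : 'M[R]_(p, q)) :
  bounded_measurable_mx (fun _ => A).
Proof. by move=> i j; exact: bounded_measurable_cst. Qed.

Lemma bounded_measurable_mx_mul p q r (F : R -> 'M[R]_(p, q)) (G : R -> 'M[R]_(q, r)) :
  bounded_measurable_mx F -> bounded_measurable_mx G ->
  bounded_measurable_mx (fun t => F t *m G t).
Proof.
move=> bF bG i j; under [fun t => _]funext do rewrite mxE.
by apply: bounded_measurable_sum => k; exact: bounded_measurableM.
Qed.

Lemma bounded_measurable_mxB p q (F G : R -> 'M[R]_(p, q)) :
  bounded_measurable_mx F -> bounded_measurable_mx G ->
  bounded_measurable_mx (fun t => F t - G t).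
Proof.
move=> bF bG i j; under [fun t => _]funext do rewrite !mxE.
exact: bounded_measurableB.
Qed.

Lemma bounded_measurable_mx_sum (I : finType) p q (F : I -> R -> 'M[R]_(p, q)) :
  (forall i, bounded_measurable_mx (F i)) ->
  bounded_measurable_mx (fun t => \sum_i F i t).
Proof.
move=> bF i j; under [fun t => _]funext do rewrite summxE.
by apply: bounded_measurable_sum => k; exact: bF.
Qed.

Lemma bounded_measurable_trmx p q (F : R -> 'M[R]_(p, q)) :
  bounded_measurable_mx F -> bounded_measurable_mx (fun t => (F t)^T).
Proof. by move=> bF i j; under [fun t => _]funext do rewrite mxE; exact: bF. Qed.

Lemma bounded_measurable_tensmx m n p q (A : 'M[R]_(m, n)) (F : R -> 'M[R]_(p, q)) :
  bounded_measurable_mx F -> bounded_measurable_mx (fun t => A *t F t).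
Proof.
move=> bF i j; under [fun t => _]funext do rewrite mxE.
by apply: bounded_measurableM => //; exact: bounded_measurable_cst.
Qed.

Lemma bounded_measurable_form p q (u : 'rV[R]_p) (F : R -> 'M[R]_(p, q))
    (v : 'cV[R]_q) :
  bounded_measurable_mx F -> bounded_measurable (fun t => (u *m F t *m v) 0 0).
Proof.
move=> bF; apply: (bounded_measurable_mx_mul (F := fun t => u *m F t)).
  by apply: bounded_measurable_mx_mul => //; exact: bounded_measurable_mx_cst.
exact: bounded_measurable_mx_cst.
Qed.

Lemma form_mxint (a b : R) p q (F : R -> 'M[R]_(p, q)) (u : 'rV[R]_p) (v : 'cV[R]_q) :
  bounded_measurable_mx F ->
  (u *m mxint a b F *m v) 0 0 = \int[mu]_(t in `[a, b]) (u *m F t *m v) 0 0.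
Proof.
move=> bF; rewrite mulmx_formE; under eq_Rintegral do rewrite mulmx_formE.
have buFv i j : bounded_measurable (fun t => u 0 i * F t i j * v j 0).
  apply: bounded_measurableM; last exact: bounded_measurable_cst.
  by apply: bounded_measurableM => //; exact: bounded_measurable_cst.
rewrite Rintegral_sum; last by move=> i; exact: bounded_measurable_sum.
apply: eq_bigr => i _; rewrite Rintegral_sum //; apply: eq_bigr => j _.
rewrite mxE RintegralZr ?RintegralZl //; apply: bounded_measurable_integrable => //.
by apply: bounded_measurableM => //; exact: bounded_measurable_cst.
Qed.

End BoundedMeasurableMx.

Section UnitVectors.
Variable R : realType.

Lemma measurable_inv : measurable_fun setT (@GRing.inv R).
Proof.
rewrite -(setvU [set (0:R)]%classic); apply/measurable_funU.
- by apply: measurableC; exact: measurable_set1.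
- exact: measurable_set1.
split; last exact: measurable_fun_set1.
apply: open_continuous_measurable_fun.
  apply: closed_openC; apply: compact_closed; [exact: Rhausdorff | exact: compact_set1].
by move=> x; rewrite inE /= => /eqP x0; exact: inv_continuous.
Qed.

Lemma sum_sqr_ge0 d (v : 'cV[R]_d) : 0 <= \sum_a v a 0 ^+ 2.
Proof. by apply: sumr_ge0 => a _; exact: sqr_ge0. Qed.

Lemma enorm_gt0 d (v : 'cV[R]_d) : v != 0 -> 0 < enorm v.
Proof.
move=> v0; rewrite /enorm sqrtr_gt0.
have [a va] : exists a, v a 0 != 0.
  apply/existsP; apply: contraR v0; rewrite negb_exists => /forallP v0.
  by apply/eqP/matrixP => i j; rewrite (ord1 j) mxE; apply/eqP/negPn.
have va2 : 0 < v a 0 ^+ 2 by rewrite lt_neqAle sqr_ge0 andbT eq_sym sqrf_eq0.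
rewrite (bigD1 a) //=; apply: lt_le_trans va2 _.
by rewrite lerDl sumr_ge0 // => b _; exact: sqr_ge0.
Qed.

Lemma normalized_sum_sqr d (v : 'cV[R]_d) : v != 0 ->
  \sum_a ((enorm v)^-1 *: v) a 0 ^+ 2 = 1.
Proof.
move=> v0; under eq_bigr do rewrite mxE exprMn.
rewrite -mulr_sumr -[X in _ * X](sqr_sqrtr (sum_sqr_ge0 v)) -/(enorm v).
by rewrite exprVn mulVf // sqrf_eq0 gt_eqF // enorm_gt0.
Qed.

Lemma normalized_coord_le1 d (v : 'cV[R]_d) a : `|((enorm v)^-1 *: v) a 0| <= 1.
Proof.
have [->|v0] := eqVneq v 0; first by rewrite scaler0 mxE normr0.
have : ((enorm v)^-1 *: v) a 0 ^+ 2 <= 1.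
  rewrite -(normalized_sum_sqr v0) (bigD1 a) //= lerDl.
  by apply: sumr_ge0 => b _; exact: sqr_ge0.
set x := _ a 0 => x2; rewrite ler_norml; apply/andP; split; nra.
Qed.

Lemma form_sqr_ge0 d (v : 'cV[R]_d) : 0 <= (v^T *m v) 0 0.
Proof. by rewrite mxE sumr_ge0 // => a _; rewrite mxE -expr2 sqr_ge0. Qed.

Lemma proj_orth_form_ge0 d (g v : 'cV[R]_d) : \sum_a g a 0 ^+ 2 = 1 ->
  0 <= (v^T *m proj_orth g *m v) 0 0.
Proof.
move=> g1; have gTg : g^T *m g = 1%:M.
  apply/matrixP => i j; rewrite !ord1 mxE [RHS]mxE eqxx /= -g1.
  by apply: eq_bigr => a _; rewrite mxE expr2.
set P := proj_orth g.
have PT : P^T = P by rewrite /P /proj_orth linearB /= trmx1 trmx_mul trmxK.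
have PP : P *m P = P.
  rewrite /P /proj_orth mulmxBl mul1mx mulmxBr mulmx1 -!mulmxA.
  by rewrite (mulmxA g^T) gTg mul1mx subrr subr0.
suff -> : v^T *m P *m v = (P *m v)^T *m (P *m v) by exact: form_sqr_ge0.
by rewrite trmx_mul PT mulmxA -(mulmxA _ P P) PP.
Qed.

End UnitVectors.

Section BearingMeasurability.
Variables (R : realType) (d n m : nat) (E : edge_list n m).
Variable p : R -> 'cV[R]_(n * d).
Hypothesis mp : forall r, measurable_fun setT (fun t => p t r 0).

Lemma measurable_eblock k a : measurable_fun setT (fun t => eblock E (p t) k a 0).
Proof.
under [fun t => _]funext do rewrite !mxE.
apply: measurable_sum => j; apply: measurable_funM => //; exact: measurable_cst.
Qed.

Lemma bounded_measurable_bearing k :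
  bounded_measurable_mx (fun t => bearing E (p t) k).
Proof.
move=> a j; rewrite (ord1 j); split; last by exists 1 => t; exact: normalized_coord_le1.
under [fun t => _]funext do rewrite mxE.
apply: measurable_funM; last exact: measurable_eblock.
apply: measurableT_comp; first exact: measurable_inv.
apply: measurableT_comp; first exact: continuous_measurable_fun (@sqrt_continuous R).
by apply: measurable_sum => b; apply: measurable_funX; exact: measurable_eblock.
Qed.

Lemma bounded_measurable_proj_bearing k :
  bounded_measurable_mx (fun t => proj_orth (bearing E (p t) k)).
Proof.
apply: bounded_measurable_mxB; first exact: bounded_measurable_mx_cst.
apply: bounded_measurable_mx_mul; first exact: bounded_measurable_bearing.
exact/bounded_measurable_trmx/bounded_measurable_bearing.
Qed.

Lemma bounded_measurable_LapB : bounded_measurable_mx (fun t => LapB E (p t)).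
Proof.
apply: bounded_measurable_mx_mul; last exact: bounded_measurable_mx_cst.
apply: bounded_measurable_mx_mul; first exact: bounded_measurable_mx_cst.
apply: bounded_measurable_mx_sum => l.
exact/bounded_measurable_tensmx/bounded_measurable_proj_bearing.
Qed.

End BearingMeasurability.

Section IncidenceForms.
Variables (R : realType) (d n m : nat) (E : edge_list n m).

Lemma form_Lap (x : 'cV[R]_(n * d)) : (x^T *m Lap R d E *m x) 0 0 =
  \sum_l ((col_block (Hbar R d E *m x) l)^T *m col_block (Hbar R d E *m x) l) 0 0.
Proof. by rewrite /Lap -form_blocks trmx_mul !mulmxA. Qed.

Lemma form_LapB (q x : 'cV[R]_(n * d)) : (x^T *m LapB E q *m x) 0 0 =
  \sum_l ((col_block (Hbar R d E *m x) l)^T *m proj_orth (bearing E q l)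
            *m col_block (Hbar R d E *m x) l) 0 0.
Proof. by rewrite /LapB -form_blockdiag trmx_mul !mulmxA. Qed.

Lemma Hbar_tens (w : 'cV[R]_n) (z : 'cV[R]_d) :
  Hbar R d E *m (w *t z) = (incidence R E *m w) *t z.
Proof. by rewrite /Hbar tensmx_mul mul1mx. Qed.

End IncidenceForms.

Section Bridges.
Variables (n m : nat) (E : edge_list n m).
Hypotheses (simpleE : simple_graph E) (acyclicE : acyclic E).

Lemma adj_in_sym (S : {set 'I_m}) : symmetric (adj_in E S).
Proof.
by move=> u v; apply/existsP/existsP => -[l /andP[lS hl]]; exists l; rewrite lS orbC.
Qed.

(* A shortest path from the head to the tail of [k] avoiding [k], closed up by [k],
   is a cycle; it has at least three vertices because [E] has no loops and no
   parallel edges. *)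
Lemma acyclic_bridge k : ~~ connect (adj_in E (~: [set k])) (E k).2 (E k).1.
Proof.
case: simpleE => noloop noparallel.
have Ek : E k = ((E k).1, (E k).2) by case: (E k).
apply/negP => /connectP[s0 path0 last0].
case: (shortenP path0) last0 => s path_s uniq_s _ last_s.
case: s => [|v [|v' s]] in path_s uniq_s last_s.
- by move: (noloop k); rewrite last_s eqxx.
- move: path_s => /= /andP[/existsP[l /andP[lS hl]] _].
  have kl : k != l by move: lS; rewrite !inE eq_sym.
  rewrite /= in last_s; rewrite -last_s in hl.
  by case/orP: hl => /eqP El; apply: (noparallel _ _ kl); [right | left]; rewrite Ek El.
- have cyc : cycle (adj_in E [set: 'I_m]) [:: (E k).2, v, v' & s].
    rewrite /cycle rcons_path; apply/andP; split.
      apply: sub_path path_s => x y /existsP[l /andP[_ hl]].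
      by apply/existsP; exists l; rewrite inE.
    by rewrite -last_s; apply/existsP; exists k; rewrite inE {1}Ek eqxx.
  by move: (acyclicE uniq_s isT); rewrite cyc.
Qed.

Lemma mulmx_incidence (R : realType) (w : 'cV[R]_n) l :
  (incidence R E *m w) l 0 = w (E l).2 0 - w (E l).1 0.
Proof.
have pick (x : 'I_n) (f : 'I_n -> R) : \sum_i (i == x)%:R * f i = f x.
  by rewrite (bigD1 x) //= eqxx mul1r big1 ?addr0 // => i /negbTE ->; rewrite mul0r.
by rewrite mxE; under eq_bigr do rewrite !mxE mulrBl; rewrite sumrB !pick.
Qed.

Lemma incidence_cut_vector (R : realType) k :
  exists w : 'cV[R]_n, incidence R E *m w = delta_mx k 0.
Proof.
pose S := ~: [set k]; have symS := sym_connect_sym (adj_in_sym S).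
exists (\col_v (connect (adj_in E S) (E k).2 v)%:R).
apply/matrixP => l j; rewrite (ord1 j) mulmx_incidence !mxE.
have [->|lk] := eqVneq l k.
  by rewrite connect0 (negbTE (acyclic_bridge k)) !eqxx subr0.
have adj_l : adj_in E S (E l).1 (E l).2.
  by apply/existsP; exists l; rewrite !inE lk -surjective_pairing eqxx.
by rewrite (symS _ (E l).2) (symS _ (E l).1) (same_connect1 symS adj_l) subrr.
Qed.

End Bridges.

Lemma common_PE_constants (R : realType) (I : finType) (T_ mu_ : I -> R) :
  (forall i, 0 < T_ i /\ 0 < mu_ i) ->
  exists T mu : R, [/\ 0 < T, 0 < mu, forall i, T_ i <= T & forall i, mu <= mu_ i].
Proof.
move=> pos.
have le_sum (F : I -> R) i : (forall j, 0 <= F j) -> F i <= \sum_j F j.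
  by move=> F0; rewrite (bigD1 i) //= lerDl sumr_ge0.
have T_ge0 i : 0 <= T_ i by exact/ltW/(pos i).1.
have mu_Vge0 i : 0 <= (mu_ i)^-1 by rewrite invr_ge0; exact/ltW/(pos i).2.
have ST_ge0 : 0 <= \sum_i T_ i by exact: sumr_ge0.
have SmuV_ge0 : 0 <= \sum_i (mu_ i)^-1 by exact: sumr_ge0.
exists (1 + \sum_i T_ i), (1 + \sum_i (mu_ i)^-1)^-1; split.
- lra.
- by rewrite invr_gt0; lra.
- by move=> i; have := le_sum _ i T_ge0; lra.
move=> i; rewrite -[mu_ i]invrK lef_pV2 ?posrE ?invr_gt0 ?(pos i).2 //; last lra.
by have := le_sum _ i mu_Vge0; lra.
Qed.

Section PersistentExcitation.
Variables (R : realType) (d n m : nat) (E : edge_list n m).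
Variable p : R -> 'cV[R]_(n * d).
Hypothesis mp : forall r, measurable_fun setT (fun t => p t r 0).

Lemma PE_dir_of_PE_LB k : simple_graph E -> acyclic E ->
  PE_LB E p -> PE_dir (fun t => bearing E (p t) k).
Proof.
move=> simpleE acyclicE [T [mu [T0 [mu0 PE]]]].
have [w Hw] := incidence_cut_vector simpleE acyclicE R k.
exists T, mu; do 2 split => //; move=> t z.
have blocks l : col_block (Hbar R d E *m (w *t z)) l = (l == k)%:R *: z.
  by rewrite Hbar_tens Hw col_block_tens_delta.
have single (F : 'I_m -> 'M[R]_d) :
    \sum_l (((l == k)%:R *: z)^T *m F l *m ((l == k)%:R *: z)) 0 0 =
    (z^T *m F k *m z) 0 0.
  rewrite (bigD1 k) //= eqxx scale1r big1 ?addr0 // => l /negbTE ->.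
  by rewrite scale0r mulmx0 mxE.
have := PE t (w *t z).
rewrite mulmx_formZ form_Lap (form_mxint _ _ _ _ (bounded_measurable_LapB E mp)).
under eq_bigr do rewrite blocks -[_^T]mulmx1.
under eq_Rintegral do rewrite form_LapB.
under eq_Rintegral do under eq_bigr do rewrite blocks.
rewrite single; under eq_Rintegral do rewrite single.
by rewrite -(form_mxint _ _ _ _ (bounded_measurable_proj_bearing E mp k)) mulmx_formZ.
Qed.

Lemma PE_LB_of_PE_dir : (forall t k, eblock E (p t) k != 0) ->
  (forall k, PE_dir (fun t => bearing E (p t) k)) -> PE_LB E p.
Proof.
move=> nonzero PEk.
have [T_ /choice[mu_ PE_]] := choice PEk.
have [T [mu [T0 mu0 TT_ mu_mu]]] :=
  common_PE_constants (fun k => conj (PE_ k).1 (PE_ k).2.1).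
exists T, mu; do 2 split => //; move=> t x.
rewrite mulmx_formZ form_Lap (form_mxint _ _ _ _ (bounded_measurable_LapB E mp)).
under eq_Rintegral do rewrite form_LapB.
rewrite Rintegral_sum; last first.
  by move=> l; exact/bounded_measurable_form/bounded_measurable_proj_bearing.
rewrite mulr_sumr; apply: ler_sum => l _; set b := col_block _ l.
have bpi_ge0 tau : 0 <= (b^T *m proj_orth (bearing E (p tau) l) *m b) 0 0.
  exact/proj_orth_form_ge0/normalized_sum_sqr/nonzero.
have bpi : bounded_measurable
    (fun tau => (b^T *m proj_orth (bearing E (p tau) l) *m b) 0 0).
  exact/bounded_measurable_form/bounded_measurable_proj_bearing.
have le_T : t + T_ l <= t + T by rewrite lerD2l.
apply: le_trans (ge0_subset_Rintegral_itv t bpi bpi_ge0 le_T).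
rewrite -(form_mxint _ _ _ _ (bounded_measurable_proj_bearing E mp l)).
have := (PE_ l).2.2 t b; rewrite mulmx_formZ mulmx1; apply: le_trans.
by rewrite ler_wpM2r ?mu_mu ?form_sqr_ge0.
Qed.

End PersistentExcitation.

Theorem lemma4 (R : realType) (d n m : nat) (E : edge_list n m)
  (p : R -> 'cV[R]_(n * d)) :
  (2 <= d)%N -> (2 <= n)%N ->
  simple_graph E -> acyclic E -> has_spanning_tree E ->
  (forall r : 'I_(n * d), measurable_fun setT (fun t => p t r 0)) ->
  (forall (t : R) (k : 'I_m), eblock E (p t) k != 0) ->
  BPE E p <-> (forall k : 'I_m, PE_dir (fun t => bearing E (p t) k)).
Proof.
move=> _ _ simpleE acyclicE treeE mp nonzero; split.
- by case=> _ PE k; exact: PE_dir_of_PE_LB.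
- by move=> PEk; split => //; exact: PE_LB_of_PE_dir.
Qed.
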